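(* For every positive integer $n$, $\mathrm{Sort}_n(\mathrm{SC}_{\underline{32}1})=\mathrm{Av}_n(\underline{123},132)$; that is, $\tau\in\mathfrak S_n$ satisfies $s(\mathrm{SC}_{\underline{32}1}(\tau))=12\cdots n$ if and only if $\tau$ has no three consecutive entries $\tau_j<\tau_{j+1}<\tau_{j+2}$ and $\tau$ avoids the classical pattern $132$.
   Context: $\mathfrak S_n$ is the set of permutations of $\{1,\dots,n\}$. A vincular pattern is a permutation with some entries underlined; a sequence contains it if it has a subsequence with the same relative order in which entries corresponding to adjacent underlined entries occupy consecutive positions. E.g. an occurrence of $\underline{32}1$ is $a_j a_{j+1} a_l$ with $l>j+1$ and $a_l<a_{j+1}<a_j$. $\mathrm{Av}_n(\dots)$ is the set of permutations of $\mathfrak S_n$ avoiding all listed patterns. For a pattern $\sigma$, the map $\mathrm{SC}_\sigma$ acts on $\tau$: read entries left to right; when the next entry $x$ is read, if pushing $x$ yields a stack whose entries read top to bottom (stack adjacency = consecutive positions) avoid $\sigma$, push $x$; otherwise pop the top stack entry to the output and repeat. At the end pop all remaining entries to the output; the output is $\mathrm{SC}_\sigma(\tau)$. West's stack-sorting map is $s=\mathrm{SC}_{21}$. $\mathrm{Sort}_n(\mathrm{SC}_\sigma)=\{\tau\in\mathfrak S_n : s(\mathrm{SC}_\sigma(\tau))=12\cdots n\}$. *)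

From mathcomp Require Import all_boot.
Set Implicit Arguments. Unset Strict Implicit. Unset Printing Implicit Defensive.

(* Sequences of positive naturals; a permutation of [n] is a seq tau with
   perm_eq tau (iota 1 n).  Positions are 0-based internally. *)

Fixpoint subseqs (T : Type) (s : seq T) : seq (seq T) :=
  match s with
  | [::] => [:: [::]]
  | x :: t => let r := subseqs t in [seq x :: u | u <- r] ++ r
  end.

(* A vincular pattern: the pattern p (a permutation, as a seq) together with
   the list adj of 0-based positions i such that pattern entries i and i+1
   are underlined together (must occupy consecutive positions). *)
Record vpattern := VPat { vp_perm : seq nat; vp_adj : seq nat }.

Definition vcontains (sg : vpattern) (s : seq nat) : bool :=
  let p := vp_perm sg in
  has (fun idx : seq nat =>
         [&& size idx == size p,
             all (fun i => all (fun j =>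
                   (nth 0 s (nth 0 idx i) < nth 0 s (nth 0 idx j))
                   == (nth 0 p i < nth 0 p j)) (iota 0 (size p)))
                 (iota 0 (size p))
           & all (fun i => nth 0 idx i.+1 == (nth 0 idx i).+1) (vp_adj sg)])
      (subseqs (iota 0 (size s))).

Definition vavoids (sg : vpattern) (s : seq nat) : bool := ~~ vcontains sg s.

Definition pat21 : vpattern := VPat [:: 2; 1] [::].
Definition pat32_1 : vpattern := VPat [:: 3; 2; 1] [:: 0].
Definition pat123u : vpattern := VPat [:: 1; 2; 3] [:: 0; 1].
Definition pat132 : vpattern := VPat [:: 1; 3; 2] [::].

(* One step of the pattern-avoiding stack machine: stack st is listed top to
   bottom (head = top), out is the output so far in reverse order.  To read x:
   if pushing x yields a stack avoiding sg, push; otherwise pop the top to the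
   output and repeat.  (On an empty stack x is pushed: a one-entry stack avoids
   every pattern of length >= 2.) *)
Fixpoint sc_read (sg : vpattern) (st out : seq nat) (x : nat)
  : seq nat * seq nat :=
  match st with
  | [::] => ([:: x], out)
  | y :: st' =>
      if vavoids sg (x :: st) then (x :: st, out)
      else sc_read sg st' (y :: out) x
  end.

Fixpoint sc_run (sg : vpattern) (st out : seq nat) (tau : seq nat) : seq nat :=
  match tau with
  | [::] => rev out ++ st
  | x :: t => let: (st', out') := sc_read sg st out x in sc_run sg st' out' t
  end.

Definition SC (sg : vpattern) (tau : seq nat) : seq nat := sc_run sg [::] [::] tau.

Definition west_s (tau : seq nat) : seq nat := SC pat21 tau.

Definition is_perm_n (n : nat) (tau : seq nat) : Prop := perm_eq tau (iota 1 n).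

Definition Sort_n (sg : vpattern) (n : nat) (tau : seq nat) : Prop :=
  is_perm_n n tau /\ west_s (SC sg tau) = iota 1 n.

Definition Av_n (pats : seq vpattern) (n : nat) (tau : seq nat) : Prop :=
  is_perm_n n tau /\ all (fun q => vavoids q tau) pats.

Example t1 : west_s [:: 2;3;1] = [:: 2;1;3]. Proof. by []. Qed.
Example t2 : vcontains pat132 [:: 1;3;2] && vavoids pat123u [:: 1;3;2;4] && vcontains pat123u [:: 2;1;3;4]. Proof. by []. Qed.
Example t3 : vcontains pat32_1 [:: 3;2;1] && vavoids pat32_1 [:: 3;1;2] && vcontains pat32_1 [::3;2;4;1]. Proof. by []. Qed.
Example t4 : SC pat32_1 [:: 2;3;1] = [:: 1;3;2] /\ SC pat32_1 [:: 1;2;3;4] = [:: 2;3;4;1] /\ west_s [:: 3;1;2] = [:: 1;2;3]. Proof. by []. Qed.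

From mathcomp Require Import all_boot zify.
Set Implicit Arguments. Unset Strict Implicit. Unset Printing Implicit Defensive.

(* While rev tau avoids 32_1 (tau has no entries c ... b a, b a adjacent, with
   c < b < a), every entry read by SC_{32_1} is pushed, so SC_{32_1}(tau) is
   rev tau.  Otherwise look at the first pop: an entry x meets a stack y :: rest
   with y < x and an entry of rest below y; y is output, while the minimum m of
   rest has nothing smaller below it and is never popped by x, so y x m is a
   231 of the output.  By Knuth's theorem West's map sorts exactly the
   231-avoiding sequences: if 231 is avoided, a popped entry is no larger than
   anything still to come; in an occurrence y .. x .. m, y leaves the stack
   before m arrives.  Hence tau is sorted by s o SC_{32_1} iff rev tau avoids
   32_1 and 231, i.e. tau avoids 132 and c ... b a; for a 132-avoiding
   permutation the entry d just before b gives d b a, an occurrence of _123_,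
   since c < b < d would be a 132. *)

Lemma mem_subseqs (T : eqType) (s u : seq T) : (u \in subseqs s) = subseq u s.
Proof.
elim: s u => [|x s IH] [|y u] //=; rewrite mem_cat IH ?sub0seq ?orbT //.
have [->|ne_yx] := eqVneq y x; last first.
  by rewrite orb_idl // => /mapP[v _ [eq_yx]]; rewrite eq_yx eqxx in ne_yx.
rewrite mem_map ?IH; last by move=> v w [].
by rewrite orb_idr // => /cons_subseq.
Qed.

Lemma subseq_sortedE (T : eqType) (leT : rel T) (s u : seq T) :
  transitive leT -> irreflexive leT -> sorted leT s ->
  subseq u s = sorted leT u && all (mem s) u.
Proof.
move=> leT_tr leT_irr sorted_s; apply/idP/andP => [sub_us|[sorted_u /allP us]].
  by split; [exact: subseq_sorted sub_us sorted_s | apply/allP/mem_subseq].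
apply/(subseq_uniqP (sorted_uniq leT_tr leT_irr sorted_s)).
apply: (irr_sorted_eq leT_tr leT_irr sorted_u (sorted_filter leT_tr _ sorted_s)).
by move=> x; rewrite mem_filter; case: (boolP (x \in u)) => // /us.
Qed.

Lemma subseq_nthP (T : eqType) (x0 : T) (s u : seq T) :
  reflect (exists2 idx, subseq idx (iota 0 (size s)) & u = map (nth x0 s) idx)
          (subseq u s).
Proof.
have map_nth_s : map (nth x0 s) (iota 0 (size s)) = s := mkseq_nth x0 s.
apply: (iffP idP) => [/subseqP[m _ ->]|[idx /(map_subseq (nth x0 s)) + ->]].
  exists (mask m (iota 0 (size s))); first exact: mask_subseq.
  by rewrite map_mask map_nth_s.
by rewrite map_nth_s.
Qed.

Lemma subseq_consP (T : eqType) (x : T) (w s : seq T) :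
  subseq (x :: w) s <-> exists s1 s2, s = s1 ++ x :: s2 /\ subseq w s2.
Proof.
split=> [|[s1 [s2 [-> sub_w]]]]; last first.
  by rewrite -[x :: w]cat0s cat_subseq ?sub0seq //= eqxx.
elim: s => [|y s IH] //=; have [<- sub_w|_ /IH[s1 [s2 [-> sub_w]]]] := eqVneq x y.
  by exists [::], s.
by exists (y :: s1), s2.
Qed.

Lemma subseq_iota0 n u : subseq u (iota 0 n) = sorted ltn u && all (gtn n) u.
Proof.
rewrite (subseq_sortedE u ltn_trans ltnn (iota_ltn_sorted 0 n)).
by congr (_ && _); apply: eq_all => i; rewrite /= mem_iota.
Qed.

Lemma subseq3_nth {s : seq nat} {P : nat -> nat -> nat -> Prop} :
  (exists i j k, [/\ i < j < k, k < size s & P (nth 0 s i) (nth 0 s j) (nth 0 s k)])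
  <-> exists a b c, subseq [:: a; b; c] s /\ P a b c.
Proof.
split=> [[i [j [k [ijk ks Pijk]]]]|[a [b [c [/(subseq_nthP 0)[idx sub_idx eq_abc] Pabc]]]]].
  exists (nth 0 s i), (nth 0 s j), (nth 0 s k); split=> //.
  by apply/(subseq_nthP 0); exists [:: i; j; k] => //; rewrite subseq_iota0 /=; lia.
case: idx sub_idx eq_abc => [|i [|j [|k [|? ?]]]] //= sub_idx [eq_a eq_b eq_c].
exists i, j, k; rewrite -eq_a -eq_b -eq_c.
by move: sub_idx; rewrite subseq_iota0 /=; split=> //; lia.
Qed.

Definition occurs_at (sg : vpattern) (s idx : seq nat) : bool :=
  let p := vp_perm sg in
  [&& size idx == size p,
      all (fun i => all (fun j =>
            (nth 0 s (nth 0 idx i) < nth 0 s (nth 0 idx j))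
            == (nth 0 p i < nth 0 p j)) (iota 0 (size p)))
          (iota 0 (size p))
    & all (fun i => nth 0 idx i.+1 == (nth 0 idx i).+1) (vp_adj sg)].

Lemma vcontainsP sg s :
  reflect (exists2 idx, subseq idx (iota 0 (size s)) & occurs_at sg s idx)
          (vcontains sg s).
Proof.
by apply: (iffP hasP) => -[idx]; rewrite ?mem_subseqs; exists idx; rewrite ?mem_subseqs.
Qed.

Lemma vcontains3P sg s : size (vp_perm sg) = 3 ->
  reflect (exists i j k, [/\ i < j < k, k < size s & occurs_at sg s [:: i; j; k]])
          (vcontains sg s).
Proof.
move=> size_p; apply: (iffP (vcontainsP sg s)) => [[idx]|[i [j [k [ijk ks occ]]]]].
  rewrite subseq_iota0; have [/eqP|] := boolP (size idx == 3); last first.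
    by rewrite /occurs_at size_p => /negbTE->.
  case: idx => [|i [|j [|k [|]]]] //= _ sub_idx occ.
  by exists i, j, k; split=> //; lia.
by exists [:: i; j; k] => //; rewrite subseq_iota0 /=; lia.
Qed.

Lemma vavoids21 (s : seq nat) : vavoids pat21 s = sorted leq s.
Proof.
rewrite sorted_pairwise; last exact: leq_trans.
apply/negP/(pairwiseP 0) => [avoid i j|sorted_s /vcontainsP[idx]].
  rewrite !inE => lt_is lt_js ij; rewrite leqNgt; apply/negP => ji; apply: avoid.
  by apply/vcontainsP; exists [:: i; j]; rewrite ?subseq_iota0 /occurs_at /=; lia.
rewrite subseq_iota0 /occurs_at /=; case: idx => [|i [|j [|? ?]]] //= sub_idx occ.
by have := sorted_s i j; rewrite !inE; lia.
Qed.

Definition pat231 : vpattern := VPat [:: 2; 3; 1] [::].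

Lemma pat132P (s : seq nat) :
  reflect (exists a b c, subseq [:: a; b; c] s /\ a < c < b) (vcontains pat132 s).
Proof.
apply: (iffP (@vcontains3P pat132 s erefl)).
  move=> [i [j [k [ijk ks occ]]]].
  by apply/subseq3_nth; exists i, j, k; split=> //; move: occ; rewrite /occurs_at /=; lia.
move=> /subseq3_nth[i [j [k [ijk ks lt]]]].
by exists i, j, k; split=> //; rewrite /occurs_at /=; lia.
Qed.

Lemma pat231P (s : seq nat) :
  reflect (exists a b c, subseq [:: a; b; c] s /\ c < a < b) (vcontains pat231 s).
Proof.
apply: (iffP (@vcontains3P pat231 s erefl)).
  move=> [i [j [k [ijk ks occ]]]].
  by apply/subseq3_nth; exists i, j, k; split=> //; move: occ; rewrite /occurs_at /=; lia.
move=> /subseq3_nth[i [j [k [ijk ks lt]]]].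
by exists i, j, k; split=> //; rewrite /occurs_at /=; lia.
Qed.

Lemma nth_size_cat (T : Type) (x0 : T) (s1 s2 : seq T) i :
  nth x0 (s1 ++ s2) (size s1 + i) = nth x0 s2 i.
Proof. by rewrite nth_cat ltnNge leq_addr addKn. Qed.

Lemma pat32_1P (s : seq nat) :
  reflect (exists s1 s2 a b c, [/\ s = s1 ++ [:: a, b & s2], c \in s2 & c < b < a])
          (vcontains pat32_1 s).
Proof.
apply: (iffP (@vcontains3P pat32_1 s erefl)) => [[i [j [k [ijk ks]]]]|].
  rewrite /occurs_at /= => /and3P[cmp /eqP eq_j _]; subst j.
  have [ik lt] : i.+2 <= k /\ nth 0 s k < nth 0 s i.+1 < nth 0 s i by lia.
  exists (take i s), (drop i.+2 s), (nth 0 s i), (nth 0 s i.+1), (nth 0 s k).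
  split=> //.
    by rewrite -!drop_nth ?cat_take_drop //; lia.
  have k_drop : k - i.+2 < size (drop i.+2 s) by rewrite size_drop; lia.
  by rewrite -(subnKC ik) -nth_drop mem_nth.
move=> [s1 [s2 [a [b [c [-> c_s2 lt]]]]]].
have nth_ab2 i := nth_size_cat 0 s1 [:: a, b & s2] i.
have nth_a := nth_ab2 0; have nth_b := nth_ab2 1; have nth_c := nth_ab2 (index c s2).+2.
rewrite /= nth_index // addn0 addn1 in nth_a nth_b nth_c.
have := index_mem c s2; rewrite c_s2 size_cat /= => c_idx.
exists (size s1), (size s1).+1, (size s1 + (index c s2).+2).
by rewrite /occurs_at /= nth_a nth_b nth_c; split; lia.
Qed.

Lemma pat123uP (s : seq nat) :
  reflect (exists s1 s2 a b c, s = s1 ++ [:: a, b, c & s2] /\ a < b < c)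
          (vcontains pat123u s).
Proof.
apply: (iffP (@vcontains3P pat123u s erefl)) => [[i [j [k [ijk ks]]]]|].
  rewrite /occurs_at /= => /and4P[cmp /eqP eq_j /eqP eq_k _]; subst j k.
  have lt : nth 0 s i < nth 0 s i.+1 < nth 0 s i.+2 by lia.
  exists (take i s), (drop i.+3 s), (nth 0 s i), (nth 0 s i.+1), (nth 0 s i.+2).
  split=> //.
  by rewrite -!drop_nth ?cat_take_drop //; lia.
move=> [s1 [s2 [a [b [c [-> lt]]]]]].
have nth_abc i := nth_size_cat 0 s1 [:: a, b, c & s2] i.
have := nth_abc 0; have := nth_abc 1; have := nth_abc 2.
rewrite /= addn0 addn1 addn2 => nth_c nth_b nth_a.
exists (size s1), (size s1).+1, (size s1).+2.
by rewrite /occurs_at /= nth_a nth_b nth_c size_cat /=; split; lia.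
Qed.

(** * The pattern-avoiding stack machine *)

Section StackMachine.

Variable sg : vpattern.

Lemma sc_read_shape st out x :
  exists k, sc_read sg st out x = (x :: drop k st, rev (take k st) ++ out).
Proof.
elim: st out => [|y st IH] out /=; first by exists 0.
case: ifP => _; first by exists 0; rewrite drop0 take0.
by have [k ->] := IH (y :: out); exists k.+1; rewrite /= rev_cons cat_rcons.
Qed.

Lemma sc_read_push st out x :
  vavoids sg (x :: st) -> sc_read sg st out x = (x :: st, out).
Proof. by case: st => [|y st] //= ->. Qed.

Lemma sc_read_avoids st out x :
  vavoids sg [:: x] -> vavoids sg (sc_read sg st out x).1.
Proof. by move=> avoid_x; elim: st out => [|y st IH] out //=; case: ifP. Qed.

Lemma sc_read_cat st out x : exists k,
  rev (sc_read sg st out x).2 ++ (sc_read sg st out x).1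
  = rev out ++ take k st ++ x :: drop k st.
Proof.
by have [k ->] := sc_read_shape st out x; exists k; rewrite /= rev_cat revK catA.
Qed.

Lemma sc_read_perm st out x :
  perm_eq (rev (sc_read sg st out x).2 ++ (sc_read sg st out x).1)
          (rev out ++ st ++ [:: x]).
Proof.
have [k ->] := sc_read_cat st out x; rewrite perm_cat2l -{3}(cat_take_drop k st).
by rewrite -catA perm_cat2l -cat1s perm_catC.
Qed.

Lemma sc_run_perm st out t : perm_eq (sc_run sg st out t) (rev out ++ st ++ t).
Proof.
elim: t st out => [|x t IH] st out /=; first by rewrite cats0.
have := sc_read_perm st out x; case: sc_read => st' out' /= read_perm.
apply: perm_trans (IH _ _) _; rewrite catA (perm_trans (perm_cat read_perm (perm_refl t))) //.
by rewrite -!catA.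
Qed.

Lemma sc_run_subseq st out t : subseq (rev out ++ st) (sc_run sg st out t).
Proof.
elim: t st out => [|x t IH] st out //=.
have [k] := sc_read_cat st out x; case: sc_read => st' out' /= read_eq.
apply: subseq_trans (IH _ _); rewrite read_eq cat_subseq //.
by rewrite -{1}(cat_take_drop k st) cat_subseq ?subseq_cons.
Qed.

Lemma sc_run_prefix st out t : exists w, sc_run sg st out t = rev out ++ w.
Proof.
elim: t st out => [|x t IH] st out /=; first by exists st.
have [k ->] := sc_read_shape st out x; have [w ->] := IH (x :: drop k st) (rev (take k st) ++ out).
by exists (take k st ++ w); rewrite rev_cat revK catA.
Qed.

Lemma SC_perm t : perm_eq (SC sg t) t.
Proof. exact: sc_run_perm. Qed.

End StackMachine.

(** * West's stack sort sorts exactly the 231-avoiding sequences *)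

Lemma vcontains231_subseq s1 s2 :
  subseq s1 s2 -> vcontains pat231 s1 -> vcontains pat231 s2.
Proof.
move=> sub /pat231P[a [b [c [sub_abc lt]]]]; apply/pat231P.
by exists a, b, c; split=> //; apply: subseq_trans sub.
Qed.

Lemma west_read_pop st out x y :
  sorted leq st -> y \in rev out ++ st -> y < x -> y \in (sc_read pat21 st out x).2.
Proof.
elim: st out => [|z st IH] out sorted_st y_in lt_yx /=; first by rewrite cats0 mem_rev in y_in.
rewrite vavoids21; case: ifP => [sorted_x|_]; last first.
  by apply: IH; rewrite ?rev_cons ?cat_rcons //; exact: path_sorted sorted_st.
move: y_in; rewrite mem_cat mem_rev => /orP[//|y_st].
by have /allP/(_ y y_st) := order_path_min leq_trans sorted_x; rewrite leqNgt lt_yx.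
Qed.

Lemma west_run_unsorted (st out A B : seq nat) (x y m : nat) :
  sorted leq st -> y \in rev out ++ st ++ A -> m < y < x -> m \in B ->
  ~~ sorted leq (sc_run pat21 st out (A ++ x :: B)).
Proof.
elim: A st out => [|a A IH] st out sorted_st y_in /andP[lt_my lt_yx] m_B /=.
  rewrite cats0 in y_in; have := west_read_pop sorted_st y_in lt_yx.
  case: sc_read => st' out' /= y_out; have [w run_eq] := sc_run_prefix pat21 st' out' B.
  have := sc_run_perm pat21 st' out' B; rewrite run_eq perm_cat2l => /perm_mem m_w.
  rewrite sorted_pairwise ?pairwise_cat; last exact: leq_trans.
  apply/negP => /and3P[/allrelP/(_ y m) le_ym _ _].
  by move: le_ym; rewrite mem_rev y_out m_w mem_cat m_B orbT leqNgt lt_my => /(_ isT isT).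
have := sc_read_perm pat21 st out a; have := @sc_read_avoids pat21 st out a.
rewrite !vavoids21 => /(_ isT); case: sc_read => st' out' /= sorted_st' read_perm.
apply: IH => //; last by rewrite lt_my.
by rewrite catA (perm_mem (perm_cat read_perm (perm_refl A))) -!catA.
Qed.

Lemma west_contains231 s : vcontains pat231 s -> ~~ sorted leq (west_s s).
Proof.
move=> /pat231P[y [x [m [/subseq_consP[A1 [B1 [-> /subseq_consP[A2 [B [-> m_B]]]]]] lt]]]].
rewrite sub1seq in m_B; rewrite /west_s /SC -cat_cons catA.
by apply: (west_run_unsorted (y := y)) m_B => //=; rewrite mem_cat mem_head orbT.
Qed.

(* The stack read bottom-up followed by the unread input is a subsequence of
   the input; its 231-avoidance makes each popped entry no larger than
   everything still to come. *)
Definition west_inv (st out t : seq nat) : Prop :=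
  [/\ sorted leq st, sorted leq (rev out), allrel leq out (st ++ t)
    & vavoids pat231 (rev st ++ t)].

Lemma west_inv_read st out x t : west_inv st out (x :: t) ->
  west_inv (sc_read pat21 st out x).1 (sc_read pat21 st out x).2 t.
Proof.
elim: st out => [|z st IH] out [sorted_st sorted_out le_out avoid] /=; first by split.
rewrite vavoids21; case: ifP => [sorted_x|unsorted].
  split=> //; last by rewrite rev_cons cat_rcons.
  have perm_t : perm_eq ([:: x] ++ (z :: st) ++ t) ((z :: st) ++ [:: x] ++ t).
    exact/permPl/perm_catCA.
  by rewrite (eq_allrel_memr _ _ (perm_mem perm_t)).
have lt_zx : z < x by rewrite ltnNge; apply: contraFN unsorted => le_xz; rewrite /= le_xz.
have le_zt : all (leq z) t.
  apply/allP => w w_t; rewrite leqNgt; apply/negP => lt_wz; move/negP: avoid; apply.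
  apply/pat231P; exists z, x, w; split; last by rewrite lt_wz.
  rewrite rev_cons cat_rcons; apply/subseq_consP; exists (rev st), (x :: t).
  by rewrite /= eqxx sub1seq.
apply: IH; split.
- exact: path_sorted sorted_st.
- move: sorted_out; rewrite !sorted_pairwise ?rev_cons ?pairwise_rcons; try exact: leq_trans.
  move=> ->; rewrite andbT; apply/allP => o; rewrite mem_rev => o_out.
  by apply: (allrelP le_out); rewrite ?mem_head.
- move: le_out; rewrite allrel_consl cat_cons allrel_consr => /andP[_ ->].
  rewrite andbT all_cat /= le_zt ltnW // !andbT.
  exact: order_path_min leq_trans sorted_st.
- apply: contra avoid; apply: vcontains231_subseq.
  by rewrite rev_cons cat_rcons cat_subseq ?subseq_cons.
Qed.

Lemma west_inv_run st out t : west_inv st out t -> sorted leq (sc_run pat21 st out t).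
Proof.
elim: t st out => [|x t IH] st out /=.
  move=> [sorted_st sorted_out le_out _]; rewrite cats0 in le_out.
  rewrite sorted_pairwise ?pairwise_cat -?sorted_pairwise ?allrel_revl; try exact: leq_trans.
  by rewrite le_out sorted_out.
by move/west_inv_read; case: sc_read => st' out'; apply: IH.
Qed.

Theorem west_s_sorted s : sorted leq (west_s s) = vavoids pat231 s.
Proof.
apply/idP/idP => [|avoid]; first by apply: contraL; exact: west_contains231.
exact: west_inv_run.
Qed.

(** * The map SC_{32_1} *)

Lemma vavoids321_catl (u s : seq nat) :
  vavoids pat32_1 (u ++ s) -> vavoids pat32_1 s.
Proof.
apply: contra => /pat32_1P[s1 [s2 [a [b [c [-> c_s2 lt]]]]]]; apply/pat32_1P.
by exists (u ++ s1), s2, a, b, c; rewrite catA.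
Qed.

Lemma vcontains321_head (x y : nat) (t : seq nat) c :
  c \in t -> c < y < x -> vcontains pat32_1 [:: x, y & t].
Proof. by move=> c_t lt; apply/pat32_1P; exists [::], t, x, y, c. Qed.

Lemma vcontains321_cons x (s : seq nat) :
  vavoids pat32_1 s -> vcontains pat32_1 (x :: s) ->
  exists y t c, [/\ s = y :: t, c \in t & c < y < x].
Proof.
move=> avoid /pat32_1P[[|z s1] [s2 [a [b [c [[eq_x eq_s] c_s2 lt]]]]]].
  by exists b, s2, c; rewrite eq_x.
by move/negP: avoid; case; apply/pat32_1P; exists s1, s2, a, b, c.
Qed.

Lemma sc_read321_min st out x m :
  vavoids pat32_1 st -> m \in st -> {in st, forall z, m <= z} ->
  m \in (sc_read pat32_1 st out x).1.
Proof.
elim: st out => [|z st IH] out // avoid m_st min_m /=.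
case: ifP => [_|/negbFE/(vcontains321_cons avoid)[y [t [c [[<- <-] c_st /andP[lt_cz _]]]]]].
  by rewrite inE m_st orbT.
have ne_mz : m != z.
  by apply: contraTneq (min_m c _) => [->|]; rewrite ?inE ?c_st ?orbT // -ltnNge.
apply: IH; first exact: (@vavoids321_catl [:: z]).
  by move: m_st; rewrite inE (negbTE ne_mz).
by move=> w w_st; apply: min_m; rewrite inE w_st orbT.
Qed.

Lemma sc_read321_pop y rest out x c :
  vavoids pat32_1 (y :: rest) -> c \in rest -> c < y < x ->
  exists2 m, m < y & subseq [:: y; x; m]
    (rev (sc_read pat32_1 (y :: rest) out x).2 ++ (sc_read pat32_1 (y :: rest) out x).1).
Proof.
move=> avoid c_rest /andP[lt_cy lt_yx].
have [m m_rest min_m] := ex_minnP (ex_intro (fun n => n \in rest) c c_rest).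
have lt_my : m < y by apply: leq_ltn_trans (min_m c c_rest) lt_cy.
exists m => //; rewrite /= /vavoids (@vcontains321_head _ _ _ c) ?lt_cy //=.
have := sc_read321_min (y :: out) x (@vavoids321_catl [:: y] _ avoid) m_rest min_m.
have [k ->] := sc_read_shape pat32_1 rest (y :: out) x.
rewrite inE (ltn_eqF (ltn_trans lt_my lt_yx)) /= => m_drop.
rewrite rev_cat revK rev_cons cat_rcons; apply/subseq_consP.
exists (rev out), (take k rest ++ x :: drop k rest).
split; first by rewrite -catA.
by apply/subseq_consP; exists (take k rest), (drop k rest); rewrite sub1seq.
Qed.

Lemma sc_run321_rev st out t :
  vavoids pat32_1 (rev t ++ st) -> sc_run pat32_1 st out t = rev out ++ rev t ++ st.
Proof.
elim: t st out => [|x t IH] st out //=; rewrite rev_cons cat_rcons => avoid.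
by rewrite sc_read_push ?IH ?rev_cons ?cat_rcons //; exact: vavoids321_catl avoid.
Qed.

Lemma sc_run321_231 st out t :
  vavoids pat32_1 st -> vcontains pat32_1 (rev t ++ st) ->
  vcontains pat231 (sc_run pat32_1 st out t).
Proof.
elim: t st out => [|x t IH] st out avoid /=; first by move/negP: avoid.
rewrite rev_cons cat_rcons; have [avoid_x|/negPn] := boolP (vavoids pat32_1 (x :: st)).
  by rewrite sc_read_push //; exact: IH.
case/(vcontains321_cons avoid) => y [rest [c [eq_st c_rest lt]]] _; subst st.
have [m lt_my] := sc_read321_pop out avoid c_rest lt.
case: sc_read => st' out' /= sub; apply/pat231P; exists y, x, m; split.
  exact: subseq_trans sub (sc_run_subseq _ _ _ _).
by rewrite lt_my; case/andP: lt.
Qed.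

Lemma sorted_west_SC321_rev t :
  sorted leq (west_s (SC pat32_1 t)) = vavoids pat32_1 (rev t) && vavoids pat231 (rev t).
Proof.
rewrite west_s_sorted; have [avoid|contains] := boolP (vavoids pat32_1 (rev t)).
  by rewrite /SC sc_run321_rev ?cats0.
by apply/negbTE/negPn/sc_run321_231; rewrite // cats0; apply/negPn.
Qed.

Lemma rev_cat_cons (T : Type) (s1 s2 : seq T) x :
  rev (s1 ++ x :: s2) = rev s2 ++ x :: rev s1.
Proof. by rewrite rev_cat rev_cons cat_rcons. Qed.

Lemma vavoids231_rev (s : seq nat) : vavoids pat231 (rev s) = vavoids pat132 s.
Proof.
congr negb; apply/pat231P/pat132P => -[a [b [c [sub lt]]]]; exists c, b, a; split; try lia.
  by rewrite -subseq_rev.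
by rewrite -subseq_rev revK.
Qed.

Lemma vavoids321_rev (s : seq nat) : uniq s -> vavoids pat132 s ->
  vavoids pat32_1 (rev s) = vavoids pat123u s.
Proof.
move=> uniq_s /pat132P avoid132; congr negb; apply/pat32_1P/pat123uP; last first.
  move=> [s1 [s2 [a [b [c [-> lt]]]]]]; exists (rev s2), (a :: rev s1), c, b, a.
  by rewrite rev_cat_cons !rev_cons !cat_rcons mem_head; split=> //; lia.
move=> [s1 [s2 [a [b [c [eq_s c_s2 lt]]]]]].
have {eq_s} : s = rev s2 ++ [:: b, a & rev s1].
  by rewrite -[s]revK eq_s rev_cat_cons rev_cons cat_rcons.
have : c \in rev s2 by rewrite mem_rev.
case/lastP: (rev s2) => [//|t d]; rewrite mem_rcons inE cat_rcons => c_dt eq_s.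
case: (ltngtP d b) => [lt_db|lt_bd|eq_db].
- by exists t, (rev s1), d, b, a; rewrite lt_db; case/andP: lt.
- case: avoid132; exists c, d, b; split; last lia.
  have c_t : c \in t by move: c_dt; case: eqP => //= eq_cd; lia.
  by rewrite eq_s (@cat_subseq _ [:: c] [:: d; b]) ?sub1seq //= !eqxx.
- by move: uniq_s; rewrite eq_s eq_db cat_uniq /= inE eqxx /= !andbF.
Qed.

Lemma sorted_west_SC321 (tau : seq nat) : uniq tau ->
  sorted leq (west_s (SC pat32_1 tau)) = vavoids pat123u tau && vavoids pat132 tau.
Proof.
move=> uniq_tau; rewrite sorted_west_SC321_rev vavoids231_rev.
by have [avoid|] := boolP (vavoids pat132 tau); rewrite ?andbF // vavoids321_rev.
Qed.

Theorem mainTheorem5 (n : nat) : 0 < n ->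
  forall tau : seq nat,
    Sort_n pat32_1 n tau <-> Av_n [:: pat123u; pat132] n tau.
Proof.
move=> _ tau; rewrite /Sort_n /Av_n /is_perm_n /= andbT.
suff west_iota : perm_eq tau (iota 1 n) ->
    west_s (SC pat32_1 tau) = iota 1 n <-> vavoids pat123u tau && vavoids pat132 tau.
  by split=> -[perm_tau west_or_avoid]; split=> //; apply/(west_iota perm_tau).
move=> perm_tau; have uniq_tau : uniq tau by rewrite (perm_uniq perm_tau) iota_uniq.
rewrite -sorted_west_SC321 //; split=> [->|sorted_west]; first exact: iota_sorted.
apply: (sorted_eq leq_trans anti_leq sorted_west (iota_sorted 1 n)).
by rewrite /west_s (perm_trans (SC_perm _ _)) // (perm_trans (SC_perm _ _)).
Qed.
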